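(* Let $n\ge1$ and let $A_n(1)$ be the $n\times(2n-1)$ matrix $\big[\binom{n+k-1-i}{k-i}\big]_{1\le i\le n,\,1\le k\le 2n-1}$ (with $\binom{m}{j}=0$ for $j<0$). For a strictly increasing map $\sigma:\{1,\ldots,n\}\to\{1,\ldots,2n-1\}$, let $\mathrm A_\sigma(1)$ be the $n\times n$ minor of $A_n(1)$ formed by the columns $\sigma_1<\cdots<\sigma_n$, and let $\tilde\sigma$ be the strictly increasing map $\tilde\sigma_i=2n-\sigma_{n+1-i}$. Then $\mathrm A_\sigma(1)=\mathrm A_{\tilde\sigma}(1)>0$. *)

From mathcomp Require Import all_boot all_order all_algebra.
Set Implicit Arguments. Unset Strict Implicit. Unset Printing Implicit Defensive.
Import Order.TTheory GRing.Theory Num.Theory.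
Local Open Scope ring_scope.

(* Indices are 0-based: row i : 'I_n stands for the paper's i+1,
   column k : 'I_(2n-1) for the paper's k+1.  The paper's entry
   binom(n+k-1-i, k-i) (0 when k<i) becomes, in 0-based indices,
   binom(n-1+(k-i), k-i) when i <= k and 0 otherwise. *)
Definition A1 (n : nat) : 'M[int]_(n, 2 * n - 1) :=
  \matrix_(i < n, k < 2 * n - 1)
    (if (i <= k)%N then ('C(n.-1 + (k - i), k - i))%:Z else 0).

Definition Aminor (n : nat) (sigma : 'I_n -> 'I_(2 * n - 1)) : 'M[int]_n :=
  colsub sigma (A1 n).

(* tilde sigma_i = 2n - sigma_{n+1-i} (1-based); 0-based this is
   (2n-2) - sigma(n-1-i) = rev_ord (sigma (rev_ord i)). *)
Definition sigma_tilde (n : nat) (sigma : 'I_n -> 'I_(2 * n - 1)) :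
  'I_n -> 'I_(2 * n - 1) := fun i => rev_ord (sigma (rev_ord i)).

(* Row i of A1 n is the evaluation, at the column indices, of the degree
   n-1 polynomial P_i(x) = binom(x - i + n - 1, n - 1), which vanishes at
   x = i-n+1, ..., i-1.  Hence every n x n minor factors as det C times the
   Vandermonde product of its columns, where C is the coefficient matrix of
   the P_i.  The leftmost minor is unitriangular, so det C > 0, and the
   Vandermonde product is positive and invariant under the reflection
   k |-> 2n-2-k, which maps sigma to sigma_tilde. *)
From mathcomp Require Import all_boot all_order all_algebra.
From mathcomp Require Import ring zify.
Set Implicit Arguments. Unset Strict Implicit. Unset Printing Implicit Defensive.
Import Order.TTheory GRing.Theory Num.Theory.
Local Open Scope ring_scope.

Definition vandermonde_prod (R : pzRingType) n (x : 'I_n -> R) : R :=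
  \prod_(i < n) \prod_(j < n | (i < j)%N) (x j - x i).

Lemma eq_vandermonde_prod (R : pzRingType) n (x y : 'I_n -> R) :
  x =1 y -> vandermonde_prod x = vandermonde_prod y.
Proof. by move=> exy; apply: eq_bigr => i _; apply: eq_bigr => j _; rewrite !exy. Qed.

Lemma vandermonde_prod_gt0 (R : numDomainType) n (x : 'I_n -> R) :
  {homo x : i j / (i < j)%N >-> i < j} -> 0 < vandermonde_prod x.
Proof.
move=> x_incr; apply: prodr_gt0 => i _; apply: prodr_gt0 => j ij.
by rewrite subr_gt0 x_incr.
Qed.

Lemma vandermonde_prod_reflect (R : comPzRingType) n (c : R) (x : 'I_n -> R) :
  vandermonde_prod (fun j => c - x (rev_ord j)) = vandermonde_prod x.
Proof.
rewrite /vandermonde_prod !(pair_big_dep xpredT (fun i j : 'I_n => (i < j)%N)) /=.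
pose swap_rev (p : 'I_n * 'I_n) := (rev_ord p.2, rev_ord p.1).
have swap_revK : involutive swap_rev by case=> a b; rewrite /swap_rev /= !rev_ordK.
rewrite (reindex_inj (inv_inj swap_revK)) /=.
apply: eq_big => [[a b]|[a b] _] /=; rewrite ?rev_ordK; last by ring.
by have := ltn_ord a; have := ltn_ord b; lia.
Qed.

Lemma det_mx_horner (R : comNzRingType) n (p : 'I_n -> {poly R}) (x : 'I_n -> R) :
  (forall i, (size (p i) <= n)%N) ->
  \det (\matrix_(i, j) (p i).[x j]) =
  \det (\matrix_(i, k < n) (p i)`_k) * vandermonde_prod x.
Proof.
move=> size_p.
have -> : \matrix_(i, j) (p i).[x j] =
          \matrix_(i, k < n) (p i)`_k *m Vandermonde n (\row_j x j).
  apply/matrixP => i j; rewrite !mxE (horner_coef_wide _ (size_p i)).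
  by apply: eq_bigr => k _; rewrite !mxE.
rewrite det_mulmx det_Vandermonde; congr (_ * _).
by apply: eq_bigr => i _; apply: eq_bigr => j _; rewrite !mxE.
Qed.

(* The product is the rising factorial (k-i+1)(k-i+2)...(k-i+N), which
   contains the factor 0 exactly when k < i <= N. *)
Lemma prod_shifted_rising (N i k : nat) : (i <= N)%N ->
  \prod_(m < N) ((k%:R : rat) - (i%:R - m.+1%:R)) =
  (if (i <= k)%N then ('C(N + (k - i), k - i) * N`!)%N%:R else 0).
Proof.
move=> le_iN; case: leqP => [le_ik|lt_ki].
  rewrite -{2}(addKn N (k - i)%N) bin_sub ?leq_addr // bin_ffact ffact_prod.
  rewrite natr_prod (reindex_inj rev_ord_inj); apply: eq_bigr => m _ /=.
  have lt_mN := ltn_ord m.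
  have -> : (N - m.+1).+1 = (N - m)%N by lia.
  have le_mNki : (m <= N + (k - i))%N by lia.
  by rewrite (natrB _ (ltnW lt_mN)) (natrB _ le_mNki) natrD (natrB _ le_ik); ring.
have lt_ikN : (i - k.+1 < N)%N by lia.
rewrite (bigD1 (Ordinal lt_ikN)) //= [X in X * _](_ : _ = 0) ?mul0r //.
have -> : (i - k.+1).+1 = (i - k)%N by lia.
by rewrite (natrB _ (ltnW lt_ki)); ring.
Qed.

Definition binomial_poly (N i : nat) : {poly rat} :=
  (N`!%:R)^-1 *: \prod_(m < N) ('X - (i%:R - m.+1%:R)%:P).

Lemma binomial_poly_nat (N i k : nat) : (i <= N)%N ->
  (binomial_poly N i).[k%:R] =
  (if (i <= k)%N then 'C(N + (k - i), k - i) else 0)%N%:R.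
Proof.
move=> le_iN; rewrite hornerZ horner_prod.
under eq_bigr do rewrite hornerXsubC.
rewrite prod_shifted_rising //; case: ifP => _; rewrite ?mulr0 // natrM mulrCA.
by rewrite mulVf ?mulr1 // pnatr_eq0 -lt0n fact_gt0.
Qed.

Lemma size_binomial_poly (N i : nat) : (size (binomial_poly N i) <= N.+1)%N.
Proof.
rewrite (leq_trans (size_scale_leq _ _)) // size_prod_XsubC.
by rewrite /index_enum unlock -enumT size_enum_ord.
Qed.

Definition binomial_coef_mx n : 'M[rat]_n :=
  \matrix_(i < n, k < n) (binomial_poly n.-1 i)`_k.

Lemma det_Aminor n (sigma : 'I_n -> 'I_(2 * n - 1)) : (1 <= n)%N ->
  (\det (Aminor sigma))%:~R =
  \det (binomial_coef_mx n) * vandermonde_prod (fun j => (sigma j : nat)%:R).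
Proof.
move=> n_gt0; rewrite -det_map_mx -det_mx_horner => [|i].
  congr (\det _); apply/matrixP => i j; rewrite !mxE binomial_poly_nat.
    by case: ifP.
  by rewrite -ltnS prednK.
by rewrite (leq_trans (size_binomial_poly _ _)) // prednK.
Qed.

Lemma det_Aminor_first_columns n (le_n_2n1 : (n <= 2 * n - 1)%N) :
  \det (Aminor (widen_ord le_n_2n1)) = 1.
Proof.
rewrite -det_tr det_trig.
  by apply: big1 => i _; rewrite !mxE /= leqnn subnn addn0 bin0.
by apply/is_trig_mxP => i j lt_ij; rewrite !mxE /=; case: leqP => //; lia.
Qed.

Lemma det_binomial_coef_mx_gt0 n : (1 <= n)%N -> 0 < \det (binomial_coef_mx n).
Proof.
move=> n_gt0; have le_n_2n1 : (n <= 2 * n - 1)%N by lia.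
have := det_Aminor (widen_ord le_n_2n1) n_gt0.
rewrite det_Aminor_first_columns => det_eq.
have vdm_gt0 : 0 < vandermonde_prod (fun j => (widen_ord le_n_2n1 j : nat)%:R : rat).
  by apply: vandermonde_prod_gt0 => i j; rewrite ltr_nat.
by rewrite -(pmulr_lgt0 _ vdm_gt0) -det_eq.
Qed.

Theorem proposition5 (n : nat) (hn : (1 <= n)%N)
  (sigma : 'I_n -> 'I_(2 * n - 1))
  (hsigma : forall i j : 'I_n, (i < j)%N -> (sigma i < sigma j)%N) :
  \det (Aminor sigma) = \det (Aminor (sigma_tilde sigma)) /\
  0 < \det (Aminor sigma).
Proof.
split.
  apply: (@intr_inj rat); rewrite !det_Aminor //; congr (_ * _).
  rewrite -[RHS](vandermonde_prod_reflect ((2 * n - 2)%N%:R)).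
  apply: eq_vandermonde_prod => j; rewrite /sigma_tilde /= rev_ordK.
  have lt_sigma := ltn_ord (sigma j).
  by rewrite -natrB; [congr (_%:R); lia | lia].
rewrite -(ltr0z rat) det_Aminor // mulr_gt0 ?det_binomial_coef_mx_gt0 //.
by apply: vandermonde_prod_gt0 => i j lt_ij; rewrite ltr_nat hsigma.
Qed.
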